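(* Let $K$ be a field, $P$ an arbitrary poset, and let $P=\bigsqcup_{i\in I}P_i$ be the decomposition of $P$ into its connected components. For $\alpha\in FI(P)$ and $i\in I$ let $\alpha_i\in FI(P_i)$ be the restriction $\alpha_i(x,y)=\alpha(x,y)$ for $x\le y$ in $P_i$. Then $\alpha$ is superregular in $FI(P)$ if and only if for every $i\in I$, $\alpha_i$ is either $0$ or invertible in $FI(P_i)$. (Equivalently, identifying $FI(P)$ with $\prod_{i\in I}FI(P_i)$, the set of superregular elements equals $\prod_{i\in I}U(P_i)^0$, where $U(P_i)$ is the group of units of $FI(P_i)$ and $U(P_i)^0=U(P_i)\cup\{0\}$.)
   Context: $K$ is a field, $P$ an arbitrary poset. $I(P)$ is the set of functions $\alpha$ assigning to each pair $x\le y$ in $P$ a value $\alpha(x,y)\in K$. An element $\alpha\in I(P)$ is a finitary series if for all $x<y$ in $P$ there are only finitely many pairs $(u,v)$ with $x\le u<v\le y$ and $\alpha(u,v)\neq0$; $FI(P)$ is the set of finitary series. $FI(P)$ is an associative $K$-algebra under pointwise addition and convolution $(\alpha\beta)(x,y)=\sum_{x\le z\le y}\alpha(x,z)\beta(z,y)$. Connected components of $P$ are the classes of the equivalence relation generated by comparability. An element $\alpha$ of an algebra $A$ is superregular if it is regular (some $\chi\in A$ has $\alpha\chi\alpha=\alpha$) and there is exactly one $\alpha^*\in A$ satisfying $\alpha\alpha^*\alpha=\alpha$ and $\alpha^*\alpha\alpha^*=\alpha^*$. *)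

From HB Require Import structures.
From mathcomp Require Import all_boot all_order all_algebra.
From Stdlib Require Import Relations ClassicalEpsilon ClassicalDescription.
Set Implicit Arguments. Unset Strict Implicit. Unset Printing Implicit Defensive.
Import GRing.Theory.
Local Open Scope ring_scope.

Section FI.
Variables (K : fieldType) (T : Type) (le : T -> T -> Prop).

Definition plt (x y : T) : Prop := le x y /\ x <> y.

(* elements of I(P) are represented by functions T -> T -> K; only the values
   at pairs x <= y matter, equality in I(P) is [ieq]. *)
Definition ieq (a b : T -> T -> K) : Prop :=
  forall x y, le x y -> a x y = b x y.

Definition finitary (a : T -> T -> K) : Prop :=
  forall x y, plt x y -> exists s : list (T * T),
    forall u v, le x u -> plt u v -> le v y -> a u v <> 0 -> List.In (u, v) s.

(* Sum of f over the z satisfying A, assuming only finitely many such z have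
   f z <> 0: the sum over any duplicate-free list of elements of A containing
   all those z (chosen by classical choice). *)
Definition fsum (A : T -> Prop) (f : T -> K) : K :=
  \sum_(z <- epsilon (inhabits (@nil T))
                 (fun s => List.NoDup s /\ (forall z, List.In z s -> A z) /\
                           (forall z, A z -> f z <> 0 -> List.In z s))) f z.

Definition conv (a b : T -> T -> K) : T -> T -> K :=
  fun x y => fsum (fun z => le x z /\ le z y) (fun z => a x z * b z y).

Definition fi_one : T -> T -> K :=
  fun x y => if excluded_middle_informative (x = y) then 1 else 0.

Definition fi_zero : T -> T -> K := fun _ _ => 0.

Definition fi_invertible (a : T -> T -> K) : Prop :=
  exists b, finitary b /\ ieq (conv a b) fi_one /\ ieq (conv b a) fi_one.

Definition fi_regular (a : T -> T -> K) : Prop :=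
  exists c, finitary c /\ ieq (conv (conv a c) a) a.

Definition fi_superregular (a : T -> T -> K) : Prop :=
  fi_regular a /\
  exists b, finitary b /\ ieq (conv (conv a b) a) a /\ ieq (conv (conv b a) b) b /\
    forall c, finitary c -> ieq (conv (conv a c) a) a ->
              ieq (conv (conv c a) c) c -> ieq c b.

Definition connected (x y : T) : Prop :=
  clos_refl_sym_trans T (fun a b => le a b \/ le b a) x y.

End FI.

Definition component (T : Type) (le : T -> T -> Prop) (x0 : T) : Type :=
  {x : T | connected le x0 x}.

Definition comp_le (T : Type) (le : T -> T -> Prop) (x0 : T) :
  component le x0 -> component le x0 -> Prop :=
  fun a b => le (proj1_sig a) (proj1_sig b).

Definition restrict (K : fieldType) (T : Type) (le : T -> T -> Prop) (x0 : T)
  (a : T -> T -> K) : component le x0 -> component le x0 -> K :=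
  fun u v => a (proj1_sig u) (proj1_sig v).

From mathcomp Require Import all_boot all_algebra.
From Stdlib Require Import Relations ClassicalEpsilon ClassicalDescription Classical
  FunctionalExtensionality PropExtensionality ProofIrrelevance Permutation Setoid Morphisms.
Set Implicit Arguments. Unset Strict Implicit. Unset Printing Implicit Defensive.
Import GRing.Theory.
Local Open Scope ring_scope.

(* 1. [fsum] is evaluated as an ordinary sum over any duplicate-free list that
      covers the support; additivity, one-term and reindexing rules follow.
   2. Convolution of finitary series is finitary, associative, unital and
      bilinear modulo [ieq], so finitary series form a ring up to [≡].
   3. Ring theory: if b is the unique reflexive generalized inverse of a, then
      ab = ba is a central idempotent (perturb b and use uniqueness);
      conversely 0 and the units have unique generalized inverses.
   4. A central series is diagonal and constant along comparable pairs (test it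
      against matrix units), so a central idempotent is 0 or 1 on a component.
   5. Restriction to a component is multiplicative, equality and finitarity
      can be checked componentwise, and inverses chosen on the components glue
      to one finitary series.
   The forward implication combines 3 and 4, the converse 3 and 5. *)

Section FiniteSums.
Variables (K : fieldType) (U : Type).

Definition ind (A : Prop) (k : K) : K :=
  if excluded_middle_informative A then k else 0.

Lemma indT (A : Prop) k : A -> ind A k = k.
Proof. by rewrite /ind; case: excluded_middle_informative. Qed.

Lemma indF (A : Prop) k : ~ A -> ind A k = 0.
Proof. by rewrite /ind; case: excluded_middle_informative. Qed.

Lemma ind_iff (A B : Prop) k : (A <-> B) -> ind A k = ind B k.
Proof. by move=> AB; case: (classic A) => HA; [rewrite !indT | rewrite !indF] => //; tauto. Qed.

Lemma indMl (A : Prop) k k' : ind A k * k' = ind A (k * k').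
Proof. by rewrite /ind; case: (excluded_middle_informative A) => HA /=; rewrite ?mul0r. Qed.

Lemma indMr (A : Prop) k k' : k * ind A k' = ind A (k * k').
Proof. by rewrite /ind; case: (excluded_middle_informative A) => HA /=; rewrite ?mulr0. Qed.

Lemma indD (A : Prop) k k' : ind A (k + k') = ind A k + ind A k'.
Proof. by rewrite /ind; case: (excluded_middle_informative A) => HA /=; rewrite ?addr0. Qed.

Lemma indN (A : Prop) k : ind A (- k) = - ind A k.
Proof. by rewrite /ind; case: (excluded_middle_informative A) => HA /=; rewrite ?oppr0. Qed.

Lemma ind_nz (A : Prop) k : ind A k <> 0 -> A /\ k <> 0.
Proof. by rewrite /ind; case: excluded_middle_informative. Qed.

Definition covers (A : U -> Prop) (f : U -> K) (L : seq U) : Prop :=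
  forall z, A z -> f z <> 0 -> List.In z L.

Lemma preimage_list (V : Type) (g : U -> V) (g_inj : forall u v, g u = g v -> u = v)
    (P : U -> Prop) (L : seq V) :
  exists s, List.NoDup s /\ forall w, List.In w s <-> List.In (g w) L /\ P w.
Proof.
elim: L => [|z L [s [s_uniq s_mem]]].
  by exists [::]; split; [exact: List.NoDup_nil | move=> w /=; tauto].
case: (classic (exists w, g w = z /\ P w /\ ~ List.In w s)) => [[w [gw [Pw w_s]]]|no_w].
- exists (w :: s); split; first by constructor.
  move=> w' /=; rewrite s_mem; split; first by case=> [<-|]; [rewrite gw; tauto | tauto].
  by case=> [[e|?] Pw']; [left; apply: g_inj; rewrite gw | right].
- exists s; split => // w' /=; rewrite s_mem; split; first tauto.
  case=> [[e|?] Pw']; last tauto.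
  by apply/s_mem; apply: NNPP => w's; apply: no_w; exists w'.
Qed.

Lemma nodup_list (L : seq U) :
  exists L', List.NoDup L' /\ forall z, List.In z L -> List.In z L'.
Proof.
have [L' [uniq_L' mem_L']] := preimage_list (fun u v (e : id u = id v) => e) (fun _ => True) L.
by exists L'; split => // z zL; apply/mem_L'.
Qed.

Lemma covers_sub (A : U -> Prop) (f : U -> K) (L L' : seq U) :
  (forall z, List.In z L -> List.In z L') -> covers A f L -> covers A f L'.
Proof. by move=> sub cover z Az fz; apply/sub/cover. Qed.

Lemma sum_perm (f : U -> K) (s1 s2 : seq U) :
  Permutation s1 s2 -> \sum_(z <- s1) f z = \sum_(z <- s2) f z.
Proof.
elim=> [|z l1 l2 _ IH|z z' l|l1 l2 l3 _ IH1 _ IH2]; rewrite ?big_cons //.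
- by rewrite IH.
- by rewrite addrCA.
- by rewrite IH1.
Qed.

Lemma sum_support (f : U -> K) (s1 s2 : seq U) :
  List.NoDup s1 -> List.NoDup s2 ->
  (forall z, f z <> 0 -> List.In z s1 <-> List.In z s2) ->
  \sum_(z <- s1) f z = \sum_(z <- s2) f z.
Proof.
move=> uniq1 uniq2 same.
have drop0 s : \sum_(z <- s) f z = \sum_(z <- [seq z <- s | f z != 0]) f z.
  by rewrite big_filter [RHS]big_mkcond; apply: eq_bigr => z _; case: eqP.
rewrite drop0 [RHS]drop0; apply/sum_perm/NoDup_Permutation; try exact: List.NoDup_filter.
move=> z; rewrite !List.filter_In.
by split=> -[zs fz]; split=> //; move/eqP: fz => /same fz; apply/fz.
Qed.

Lemma eq_sum_In (s : seq U) (F G : U -> K) :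
  (forall z, List.In z s -> F z = G z) -> \sum_(z <- s) F z = \sum_(z <- s) G z.
Proof.
elim: s => [|z s IH] eqFG; first by rewrite !big_nil.
by rewrite !big_cons eqFG /=; [rewrite IH // => w ws; apply: eqFG; right | left].
Qed.

Lemma fsum_cover (A : U -> Prop) (f : U -> K) (L : seq U) :
  List.NoDup L -> covers A f L -> fsum A f = \sum_(z <- L) ind (A z) (f z).
Proof.
move=> uniq_L cover_L; rewrite /fsum.
set Valid := fun s => _.
have [s0 [uniq_s0 mem_s0]] := preimage_list (fun u v (e : id u = id v) => e) A L.
have : Valid (epsilon (inhabits [::]) Valid).
  apply: epsilon_spec; exists s0; split=> //; split=> z; first by case/mem_s0.
  by move=> Az fz; apply/mem_s0; split => //; apply: cover_L.
move: (epsilon _ Valid) => s [uniq_s [s_A cover_s]].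
rewrite (eq_sum_In (G := fun z => ind (A z) (f z))) => [|z /s_A Az]; last by rewrite indT.
apply: sum_support => // z nz; have [Az fz] := ind_nz nz.
by split=> _; [apply: cover_L | apply: cover_s].
Qed.

Lemma fsum_zero (A : U -> Prop) (f : U -> K) :
  (forall z, A z -> f z = 0) -> fsum A f = 0.
Proof.
move=> f0; rewrite (@fsum_cover _ _ [::]) ?big_nil //; first by constructor.
by move=> z /f0.
Qed.

Lemma fsum_single (A : U -> Prop) (f : U -> K) u :
  A u -> (forall z, A z -> f z <> 0 -> z = u) -> fsum A f = f u.
Proof.
move=> Au single; rewrite (@fsum_cover _ _ [:: u]) ?big_seq1 ?indT //.
- by constructor => //; constructor.
- by move=> z Az fz; left; rewrite (single z Az fz).
Qed.

Lemma eq_fsum (A : U -> Prop) (f g : U -> K) (L : seq U) :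
  covers A f L -> (forall z, A z -> f z = g z) -> fsum A f = fsum A g.
Proof.
move=> cover_f eq_fg; have [L' [uniq_L' sub_L']] := nodup_list L.
have cover' := covers_sub sub_L' cover_f.
rewrite (fsum_cover uniq_L' cover') (@fsum_cover _ g L') // => [|z Az]; last first.
  by rewrite -eq_fg //; apply: cover'.
apply: eq_bigr => z _; case: (classic (A z)) => Az; last by rewrite !indF.
by rewrite !indT // eq_fg.
Qed.

Lemma fsumD (A : U -> Prop) (f g : U -> K) (L : seq U) :
  covers A f L -> covers A g L ->
  fsum A (fun z => f z + g z) = fsum A f + fsum A g.
Proof.
move=> cover_f cover_g; have [L' [uniq_L' sub_L']] := nodup_list L.
have cover'_f := covers_sub sub_L' cover_f; have cover'_g := covers_sub sub_L' cover_g.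
have cover'_fg : covers A (fun z => f z + g z) L'.
  move=> z Az; case: (classic (f z = 0)) => [->|fz _]; last exact: cover'_f.
  by rewrite add0r; apply: cover'_g.
rewrite (fsum_cover uniq_L' cover'_fg) (fsum_cover uniq_L' cover'_f).
by rewrite (fsum_cover uniq_L' cover'_g) -big_split; apply: eq_bigr => z _; rewrite indD.
Qed.

Lemma fsumN (A : U -> Prop) (f : U -> K) (L : seq U) :
  covers A f L -> fsum A (fun z => - f z) = - fsum A f.
Proof.
move=> cover_f; have [L' [uniq_L' sub_L']] := nodup_list L.
have cover' := covers_sub sub_L' cover_f.
have cover'_N : covers A (fun z => - f z) L'.
  by move=> z Az /eqP; rewrite oppr_eq0 => /eqP; apply: cover'.
rewrite (fsum_cover uniq_L' cover'_N) (fsum_cover uniq_L' cover') -sumrN.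
by apply: eq_bigr => z _; rewrite indN.
Qed.

End FiniteSums.

Section Reindexing.
Variables (K : fieldType) (U V : Type).

Lemma fsum_inj (g : U -> V) (g_inj : forall u v, g u = g v -> u = v)
    (A : V -> Prop) (f : V -> K) (L : seq V) :
  (forall z, A z -> exists w, g w = z) -> covers A f L ->
  fsum (fun w => A (g w)) (fun w => f (g w)) = fsum A f.
Proof.
move=> A_range cover_f; have [L' [uniq_L' sub_L']] := nodup_list L.
have cover' := covers_sub sub_L' cover_f.
have [s [uniq_s mem_s]] := preimage_list g_inj (fun w => A (g w)) L'.
rewrite (@fsum_cover _ _ _ _ s) => [||w Aw fw]; last 2 first.
- exact: uniq_s.
- by apply/mem_s; split => //; apply: cover'.
rewrite (fsum_cover uniq_L' cover') -(big_map g xpredT (fun z => ind (A z) (f z))).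
apply: sum_support => [||z nz].
- exact: FinFun.Injective_map_NoDup.
- exact: uniq_L'.
have [Az _] := ind_nz nz; have [w gwz] := A_range z Az; subst z.
rewrite List.in_map_iff; split.
- by case=> w' [/g_inj -> /mem_s []].
- by move=> gw; exists w; split => //; apply/mem_s.
Qed.

End Reindexing.

(* A partially ordered set, bundled so that subposets can be formed. *)
Record poset := Poset {
  pelt :> Type;
  ple : pelt -> pelt -> Prop;
  ple_refl : forall x, ple x x;
  ple_anti : forall x y, ple x y -> ple y x -> x = y;
  ple_trans : forall x y z, ple x y -> ple y z -> ple x z }.

Lemma mul_neq0 (K : fieldType) (x y : K) : x * y <> 0 -> x <> 0 /\ y <> 0.
Proof. by move=> xy0; split=> e; apply: xy0; rewrite e ?mul0r ?mulr0. Qed.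

Section Convolution.
Variables (K : fieldType) (P : poset).
Local Notation le := (@ple P).
Local Notation fn := (P -> P -> K).
Local Notation interval x y := (fun z : P => le x z /\ le z y).

Lemma finitary_points (a : fn) : finitary le a -> forall x y, le x y ->
  exists L, forall u v, le x u -> le u v -> le v y -> u <> v -> a u v <> 0 ->
    List.In u L /\ List.In v L.
Proof.
move=> fa x y xy; case: (classic (x = y)) => [<-|nxy].
  exists [::] => u v xu uv vx nuv; case: nuv.
  by apply: ple_anti uv (ple_trans vx xu).
have [s supp_s] := fa x y (conj xy nxy).
exists (map fst s ++ map snd s) => u v xu uv vy nuv auv.
have uv_s := supp_s u v xu (conj uv nuv) vy auv.
by split; apply/List.in_or_app; [left | right]; apply/List.in_map_iff; exists (u, v).
Qed.

Definition row_supp (a : fn) x y L := forall z, le x z -> le z y -> a x z <> 0 -> List.In z L.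
Definition col_supp (b : fn) x y L := forall z, le x z -> le z y -> b z y <> 0 -> List.In z L.

Lemma finitary_row (a : fn) x y : finitary le a -> le x y -> exists L, row_supp a x y L.
Proof.
move=> fa xy; have [L supp_L] := finitary_points fa xy.
exists (x :: L) => z xz zy axz; case: (classic (x = z)) => [<-|nxz]; first by left.
by right; case: (supp_L x z (ple_refl x) xz zy nxz axz).
Qed.

Lemma finitary_col (b : fn) x y : finitary le b -> le x y -> exists L, col_supp b x y L.
Proof.
move=> fb xy; have [L supp_L] := finitary_points fb xy.
exists (y :: L) => z xz zy bzy; case: (classic (z = y)) => [->|nzy]; first by left.
by right; case: (supp_L z y xz zy (ple_refl y) nzy bzy).
Qed.

Lemma conv_cover_row (a b : fn) x y L :
  row_supp a x y L -> covers (interval x y) (fun z => a x z * b z y) L.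
Proof. by move=> row z [xz zy] /mul_neq0 [axz _]; apply: row. Qed.

Lemma conv_cover_col (a b : fn) x y L :
  col_supp b x y L -> covers (interval x y) (fun z => a x z * b z y) L.
Proof. by move=> col z [xz zy] /mul_neq0 [_ bzy]; apply: col. Qed.

Lemma conv_sum (a b : fn) x y L : List.NoDup L ->
  row_supp a x y L \/ col_supp b x y L ->
  conv le a b x y = \sum_(z <- L) ind (le x z /\ le z y) (a x z * b z y).
Proof.
move=> uniq_L [row|col]; apply: fsum_cover => //.
- exact: conv_cover_row.
- exact: conv_cover_col.
Qed.

Lemma conv_congr (a a' b b' : fn) : finitary le a ->
  ieq le a a' -> ieq le b b' -> ieq le (conv le a b) (conv le a' b').
Proof.
move=> fa eq_a eq_b x y xy; have [L row] := finitary_row fa xy.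
rewrite /conv; apply: (eq_fsum (conv_cover_row (b := b) row)) => z [xz zy].
by rewrite eq_a // eq_b.
Qed.

Lemma conv_finitary (a b : fn) : finitary le a -> finitary le b -> finitary le (conv le a b).
Proof.
move=> fa fb x y [xy nxy].
have [La supp_a] := finitary_points fa xy; have [Lb supp_b] := finitary_points fb xy.
pose M := La ++ Lb.
exists (List.list_prod M M) => u v xu [uv nuv] vy cuv.
have [z [[uz zv] abz]] : exists z, (le u z /\ le z v) /\ a u z * b z v <> 0.
  apply: NNPP => none; apply: cuv; apply: fsum_zero => z uzv.
  by apply: NNPP => abz; apply: none; exists z.
have [auz bzv] := mul_neq0 abz.
have zy := ple_trans zv vy; have xz := ple_trans xu uz.
have inM w : List.In w La \/ List.In w Lb -> List.In w M by apply: List.in_or_app.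
apply: List.in_prod; apply: inM.
- case: (classic (u = z)) => [euz|nuz]; last by left; case: (supp_a u z xu uz zy nuz auz).
  by subst z; right; case: (supp_b u v xu uv vy nuv bzv).
- case: (classic (z = v)) => [ezv|nzv]; last by right; case: (supp_b z v xz zv vy nzv bzv).
  by subst z; left; case: (supp_a u v xu uv vy nuv auz).
Qed.

Lemma conv_conv_l (a b c : fn) x y L : List.NoDup L ->
  row_supp a x y L -> col_supp c x y L ->
  conv le (conv le a b) c x y = \sum_(z <- L) \sum_(w <- L)
    ind ((le x z /\ le z y) /\ (le x w /\ le w z)) (a x w * b w z * c z y).
Proof.
move=> uniq_L row col; rewrite (conv_sum uniq_L (or_intror col)).
apply: eq_bigr => z _; case: (classic (le x z /\ le z y)) => [[xz zy]|not_xzy]; last first.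
  by rewrite indF // big1 // => w _; rewrite indF //; case.
have row_z : row_supp a x z L by move=> w xw wz; apply: row xw (ple_trans wz zy).
rewrite indT // (conv_sum uniq_L (or_introl row_z)) mulr_suml.
by apply: eq_bigr => w _; rewrite indMl; apply: ind_iff; tauto.
Qed.

Lemma conv_conv_r (a b c : fn) x y L : List.NoDup L ->
  row_supp a x y L -> col_supp c x y L ->
  conv le a (conv le b c) x y = \sum_(w <- L) \sum_(z <- L)
    ind ((le x w /\ le w y) /\ (le w z /\ le z y)) (a x w * (b w z * c z y)).
Proof.
move=> uniq_L row col; rewrite (conv_sum uniq_L (or_introl row)).
apply: eq_bigr => w _; case: (classic (le x w /\ le w y)) => [[xw wy]|not_xwy]; last first.
  by rewrite indF // big1 // => z _; rewrite indF //; case.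
have col_w : col_supp c w y L by move=> z wz zy; apply: col (ple_trans xw wz) zy.
rewrite indT // (conv_sum uniq_L (or_intror col_w)) mulr_sumr.
by apply: eq_bigr => z _; rewrite indMr; apply: ind_iff; tauto.
Qed.

Lemma conv_assoc (a b c : fn) : finitary le a -> finitary le c ->
  ieq le (conv le (conv le a b) c) (conv le a (conv le b c)).
Proof.
move=> fa fc x y xy.
have [La row_a] := finitary_row fa xy; have [Lc col_c] := finitary_col fc xy.
have [L [uniq_L sub_L]] := nodup_list (La ++ Lc).
have row : row_supp a x y L.
  by move=> z xz zy az; apply/sub_L/List.in_or_app; left; apply: row_a.
have col : col_supp c x y L.
  by move=> z xz zy cz; apply/sub_L/List.in_or_app; right; apply: col_c.
rewrite (conv_conv_l b uniq_L row col) (conv_conv_r b uniq_L row col) exchange_big.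
apply: eq_bigr => w _; apply: eq_bigr => z _; rewrite mulrA; apply: ind_iff.
by split=> [[[xz zy] [xw wz]]|[[xw wy] [wz zy]]]; do ![split] => //;
  [exact: ple_trans wz zy | exact: ple_trans xw wz].
Qed.

Lemma fi_one_diag (T : Type) (x : T) : fi_one K x x = 1.
Proof. by rewrite /fi_one; case: excluded_middle_informative. Qed.

Lemma fi_one_offdiag (T : Type) (x y : T) : x <> y -> fi_one K x y = 0.
Proof. by rewrite /fi_one; case: excluded_middle_informative. Qed.

Lemma fi_one_nz (T : Type) (x y : T) : fi_one K x y <> 0 -> x = y.
Proof. by move=> nz; apply: NNPP => nxy; apply: nz; apply: fi_one_offdiag. Qed.

Lemma fi_one_finitary : finitary le (@fi_one K P).
Proof. by move=> x y _; exists [::] => u v _ [_ nuv] _; rewrite fi_one_offdiag. Qed.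

Lemma fi_zero_finitary : finitary le (@fi_zero K P).
Proof. by move=> x y _; exists [::]. Qed.

Lemma conv_1l (a : fn) : ieq le (conv le (@fi_one K P) a) a.
Proof.
move=> x y xy; rewrite /conv (@fsum_single _ _ _ _ x).
- by rewrite fi_one_diag mul1r.
- by split; [apply: ple_refl | ].
- by move=> z _ nz; have [one_xz _] := mul_neq0 nz; rewrite (fi_one_nz one_xz).
Qed.

Lemma conv_1r (a : fn) : ieq le (conv le a (@fi_one K P)) a.
Proof.
move=> x y xy; rewrite /conv (@fsum_single _ _ _ _ y).
- by rewrite fi_one_diag mulr1.
- by split; [ | apply: ple_refl].
- by move=> z _ nz; have [_ one_zy] := mul_neq0 nz; apply: fi_one_nz one_zy.
Qed.

Lemma conv_0l (a : fn) : ieq le (conv le (@fi_zero K P) a) (@fi_zero K P).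
Proof. by move=> x y _; apply: fsum_zero => z _; rewrite mul0r. Qed.

Lemma conv_0r (a : fn) : ieq le (conv le a (@fi_zero K P)) (@fi_zero K P).
Proof. by move=> x y _; apply: fsum_zero => z _; rewrite mulr0. Qed.

Definition fadd (a b : fn) : fn := fun x y => a x y + b x y.
Definition fopp (a : fn) : fn := fun x y => - a x y.

Lemma fadd_finitary (a b : fn) : finitary le a -> finitary le b -> finitary le (fadd a b).
Proof.
move=> fa fb x y xy; have [sa supp_a] := fa x y xy; have [sb supp_b] := fb x y xy.
exists (sa ++ sb) => u v xu uv vy abuv; apply/List.in_or_app.
case: (classic (a u v = 0)) => [auv|auv]; last by left; apply: supp_a.
by right; apply: supp_b => // buv; apply: abuv; rewrite /fadd auv buv addr0.
Qed.

Lemma fopp_finitary (a : fn) : finitary le a -> finitary le (fopp a).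
Proof.
move=> fa x y xy; have [s supp_s] := fa x y xy.
by exists s => u v xu uv vy /eqP; rewrite oppr_eq0 => /eqP; apply: supp_s.
Qed.

Lemma conv_Dl (a b c : fn) : finitary le a -> finitary le b ->
  ieq le (conv le (fadd a b) c) (fadd (conv le a c) (conv le b c)).
Proof.
move=> fa fb x y xy.
have [La row_a] := finitary_row fa xy; have [Lb row_b] := finitary_row fb xy.
have cover_a : row_supp a x y (La ++ Lb).
  by move=> z xz zy az; apply/List.in_or_app; left; apply: row_a.
have cover_b : row_supp b x y (La ++ Lb).
  by move=> z xz zy bz; apply/List.in_or_app; right; apply: row_b.
have cover_ab : row_supp (fadd a b) x y (La ++ Lb).
  move=> z xz zy; case: (classic (a x z = 0)) => [az|az _]; last exact: cover_a.
  by rewrite /fadd az add0r; apply: cover_b.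
rewrite /conv {2}/fadd -(fsumD (conv_cover_row (b := c) cover_a) (conv_cover_row cover_b)).
by apply: (eq_fsum (conv_cover_row (b := c) cover_ab)) => z _; rewrite mulrDl.
Qed.

Lemma conv_Dr (a b c : fn) : finitary le a ->
  ieq le (conv le a (fadd b c)) (fadd (conv le a b) (conv le a c)).
Proof.
move=> fa x y xy; have [L row] := finitary_row fa xy.
rewrite /conv {2}/fadd -(fsumD (conv_cover_row (b := b) row) (conv_cover_row (b := c) row)).
by apply: (eq_fsum (conv_cover_row (b := fadd b c) row)) => z _; rewrite mulrDr.
Qed.

Lemma conv_Nl (a b : fn) : finitary le a ->
  ieq le (conv le (fopp a) b) (fopp (conv le a b)).
Proof.
move=> fa x y xy; have [L row] := finitary_row fa xy.
have row_N : row_supp (fopp a) x y L.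
  by move=> z xz zy /eqP; rewrite oppr_eq0 => /eqP; apply: row.
rewrite /conv {2}/fopp -(fsumN (conv_cover_row (b := b) row)).
by apply: (eq_fsum (conv_cover_row (b := b) row_N)) => z _; rewrite mulNr.
Qed.

Lemma conv_Nr (a b : fn) : finitary le a ->
  ieq le (conv le a (fopp b)) (fopp (conv le a b)).
Proof.
move=> fa x y xy; have [L row] := finitary_row fa xy.
rewrite /conv {2}/fopp -(fsumN (conv_cover_row (b := b) row)).
by apply: (eq_fsum (conv_cover_row (b := fopp b) row)) => z _; rewrite mulrN.
Qed.

End Convolution.

Record series (K : fieldType) (P : poset) := Series {
  sfun :> P -> P -> K;
  sfun_finitary : finitary (@ple P) sfun }.

Section SeriesOperations.
Variables (K : fieldType) (P : poset).
Local Notation series := (series K P).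

Definition seqv (a b : series) : Prop := ieq (@ple P) a b.
Definition smul (a b : series) : series :=
  Series (conv_finitary (sfun_finitary a) (sfun_finitary b)).
Definition sadd (a b : series) : series :=
  Series (fadd_finitary (sfun_finitary a) (sfun_finitary b)).
Definition sopp (a : series) : series := Series (fopp_finitary (sfun_finitary a)).
Definition sone : series := Series (@fi_one_finitary K P).
Definition szero : series := Series (@fi_zero_finitary K P).

Lemma seqv_refl a : seqv a a. Proof. by []. Qed.
Lemma seqv_sym a b : seqv a b -> seqv b a. Proof. by move=> eq_ab x y xy; rewrite eq_ab. Qed.
Lemma seqv_trans a b c : seqv a b -> seqv b c -> seqv a c.
Proof. by move=> eq_ab eq_bc x y xy; rewrite eq_ab ?eq_bc. Qed.

End SeriesOperations.

Arguments sone {K P}.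
Arguments szero {K P}.

Notation "a ≡ b" := (seqv a b) (at level 70).
Declare Scope series_scope.
Delimit Scope series_scope with series.
Notation "1" := sone : series_scope.
Notation "0" := szero : series_scope.
Notation "a * b" := (smul a b) : series_scope.
Notation "a + b" := (sadd a b) : series_scope.
Notation "- a" := (sopp a) : series_scope.
Notation "a - b" := (sadd a (sopp b)) : series_scope.

Add Parametric Relation (K : fieldType) (P : poset) : (series K P) (@seqv K P)
  reflexivity proved by (@seqv_refl K P)
  symmetry proved by (@seqv_sym K P)
  transitivity proved by (@seqv_trans K P) as seqv_rel.

Add Parametric Morphism (K : fieldType) (P : poset) : (@smul K P)
  with signature (@seqv K P) ==> (@seqv K P) ==> (@seqv K P) as smul_morph.
Proof. by move=> a a' eq_a b b' eq_b; apply: conv_congr => //; apply: sfun_finitary. Qed.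

Add Parametric Morphism (K : fieldType) (P : poset) : (@sadd K P)
  with signature (@seqv K P) ==> (@seqv K P) ==> (@seqv K P) as sadd_morph.
Proof. by move=> a a' eq_a b b' eq_b x y xy; rewrite /= /fadd eq_a ?eq_b. Qed.

Add Parametric Morphism (K : fieldType) (P : poset) : (@sopp K P)
  with signature (@seqv K P) ==> (@seqv K P) as sopp_morph.
Proof. by move=> a a' eq_a x y xy; rewrite /= /fopp eq_a. Qed.

Section SeriesRing.
Variables (K : fieldType) (P : poset).
Implicit Types a b c : series K P.
Local Open Scope series_scope.

Lemma smulA a b c : a * b * c ≡ a * (b * c).
Proof. by apply: conv_assoc; apply: sfun_finitary. Qed.
Lemma smul1l a : 1 * a ≡ a. Proof. exact: conv_1l. Qed.
Lemma smul1r a : a * 1 ≡ a. Proof. exact: conv_1r. Qed.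
Lemma smul0l a : 0 * a ≡ 0. Proof. exact: conv_0l. Qed.
Lemma smul0r a : a * 0 ≡ 0. Proof. exact: conv_0r. Qed.
Lemma smulDl a b c : (a + b) * c ≡ a * c + b * c.
Proof. by apply: conv_Dl; apply: sfun_finitary. Qed.
Lemma smulDr a b c : a * (b + c) ≡ a * b + a * c.
Proof. by apply: conv_Dr; apply: sfun_finitary. Qed.
Lemma smulNl a b : - a * b ≡ - (a * b).
Proof. by apply: conv_Nl; apply: sfun_finitary. Qed.
Lemma smulNr a b : a * - b ≡ - (a * b).
Proof. by apply: conv_Nr; apply: sfun_finitary. Qed.
Lemma smulBl a b c : (a - b) * c ≡ a * c - b * c.
Proof. by rewrite smulDl smulNl. Qed.
Lemma smulBr a b c : a * (b - c) ≡ a * b - a * c.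
Proof. by rewrite smulDr smulNr. Qed.
Lemma saddA a b c : a + b + c ≡ a + (b + c).
Proof. by move=> x y _; rewrite /= /fadd addrA. Qed.
Lemma sadd0l a : 0 + a ≡ a.
Proof. by move=> x y _; rewrite /= /fadd /fi_zero add0r. Qed.
Lemma sadd0r a : a + 0 ≡ a.
Proof. by move=> x y _; rewrite /= /fadd /fi_zero addr0. Qed.
Lemma ssubrr a : a - a ≡ 0.
Proof. by move=> x y _; rewrite /= /fadd /fopp /fi_zero subrr. Qed.
Lemma ssubr_eq0 a b : a - b ≡ 0 -> a ≡ b.
Proof. by move=> ab0 x y xy; apply/eqP; rewrite -subr_eq0; apply/eqP; apply: ab0. Qed.
Lemma saddr_eq b d : b + d ≡ b -> d ≡ 0.
Proof. by move=> bd x y xy; apply: (addrI (b x y)); rewrite addr0; apply: bd. Qed.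

End SeriesRing.

Definition gen_inverse (K : fieldType) (P : poset) (a c : series K P) : Prop :=
  (a * c * a ≡ a /\ c * a * c ≡ c)%series.

Definition central (K : fieldType) (P : poset) (e : series K P) : Prop :=
  forall x, (e * x ≡ x * e)%series.

(* Uniqueness is used
   through perturbations b + d of b which are again generalized inverses. *)
Section UniqueGeneralizedInverse.
Variables (K : fieldType) (P : poset) (a b : series K P).
Local Open Scope series_scope.
Hypothesis inv_ab : gen_inverse a b.
Hypothesis inv_unique : forall c, gen_inverse a c -> c ≡ b.

Let aba : a * b * a ≡ a := proj1 inv_ab.
Let bab : b * a * b ≡ b := proj2 inv_ab.

Lemma left_annihilator : (1 - a * b) * a ≡ 0.
Proof. by rewrite smulBl smul1l aba ssubrr. Qed.
Lemma right_annihilator : a * (1 - b * a) ≡ 0.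
Proof. by rewrite smulBr smul1r -smulA aba ssubrr. Qed.
Lemma ba_annihilator : b * a * (1 - b * a) ≡ 0.
Proof. by rewrite smulBr smul1r -smulA bab ssubrr. Qed.

(* If ada = 0 and dab + bad + dad = d, then b + d is again a reflexive
   generalized inverse of a, so d = 0 by uniqueness. *)
Lemma perturbation_vanishes d : a * d * a ≡ 0 ->
  d * a * b + (b * a * d + d * a * d) ≡ d -> d ≡ 0.
Proof.
move=> ada0 expand; apply: (@saddr_eq _ _ b); apply: inv_unique; split.
- by rewrite smulDr smulDl aba ada0 sadd0r.
- by rewrite smulDr !smulDl saddA bab expand.
Qed.

Lemma left_annihilatorX x : x * (1 - a * b) * a ≡ 0.
Proof. by rewrite smulA left_annihilator smul0r. Qed.
Lemma right_annihilatorX x : x * a * (1 - b * a) ≡ 0.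
Proof. by rewrite smulA right_annihilator smul0r. Qed.
Lemma abaX x : x * a * b * a ≡ x * a.
Proof. by rewrite !smulA -(smulA a) aba. Qed.

(* Perturbing by ba x (1 - ab), resp. by (1 - ba) x ab, gives the two
   absorption laws below. *)
Lemma ba_absorbs x : b * a * x ≡ b * a * x * (a * b).
Proof.
have d0 : b * a * x * (1 - a * b) ≡ 0.
  apply: perturbation_vanishes; rewrite -!smulA ?left_annihilatorX ?smul0l //.
  by rewrite bab sadd0l sadd0r.
by apply: ssubr_eq0; rewrite smulBr smul1r in d0.
Qed.

Lemma ab_absorbs x : x * (a * b) ≡ b * a * x * (a * b).
Proof.
have d0 : (1 - b * a) * x * a * b ≡ 0.
  apply: perturbation_vanishes; rewrite -!smulA.
    by rewrite right_annihilator !smul0l.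
  by rewrite ba_annihilator !abaX right_annihilatorX !smul0l sadd0l sadd0r.
apply: ssubr_eq0; rewrite !smulA smulBl smul1l -!smulA in d0.
by rewrite -!smulA.
Qed.

Lemma unique_inverse_central : a * b ≡ b * a /\ central (a * b) /\ a * b * (a * b) ≡ a * b.
Proof.
have ab_ba : a * b ≡ b * a.
  have e1 : b * a ≡ b * a * (a * b) by have := ba_absorbs 1; rewrite !smul1r.
  have e2 : a * b ≡ b * a * (a * b) by have := ab_absorbs 1; rewrite smul1l smul1r.
  by rewrite e2 -e1.
split=> //; split; last by rewrite -smulA aba.
by move=> x; rewrite ab_ba ba_absorbs -ab_absorbs ab_ba.
Qed.

End UniqueGeneralizedInverse.

Section ZeroOrUnit.
Variables (K : fieldType) (P : poset).
Local Open Scope series_scope.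

Definition zero_or_inverse (a g : series K P) : Prop :=
  (a ≡ 0 /\ g ≡ 0) \/ (a * g ≡ 1 /\ g * a ≡ 1).

Lemma zero_or_inverse_unique (a g : series K P) :
  zero_or_inverse a g -> gen_inverse a g /\ forall c, gen_inverse a c -> c ≡ g.
Proof.
case=> [[a0 g0]|[ag1 ga1]].
- split; first by split; rewrite a0 g0 !smul0l.
  by move=> c [_ cac]; rewrite -cac a0 smul0r smul0l g0.
- split; first by split; [rewrite ag1 | rewrite ga1]; rewrite smul1l.
  move=> c [aca _].
  transitivity (g * a * c * (a * g)); first by rewrite ga1 ag1 smul1l smul1r.
  by rewrite !smulA -(smulA c) -(smulA a) -(smulA a c) aca ag1 smul1r.
Qed.

Lemma zero_or_inverse_seqv (a g g' : series K P) :
  g ≡ g' -> zero_or_inverse a g -> zero_or_inverse a g'.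
Proof. by move=> eq_g [[a0 g0]|[ag ga]]; [left | right]; rewrite -eq_g. Qed.

End ZeroOrUnit.

(* A central series has zero off-diagonal entries and a diagonal that is
   constant along comparable pairs; this is tested against matrix units. *)
Section CentralSeries.
Variables (K : fieldType) (P : poset).
Local Notation le := (@ple P).

Definition unit_fn (p q : P) : P -> P -> K := fun u v => ind (u = p /\ v = q) 1.

Lemma unit_fn_nz p q u v : unit_fn p q u v <> 0 -> u = p /\ v = q.
Proof. by move=> nz; case: (ind_nz nz). Qed.

Lemma unit_fn_finitary p q : finitary le (unit_fn p q).
Proof.
by move=> x y _; exists [:: (p, q)] => u v _ _ _ /unit_fn_nz [-> ->]; left.
Qed.

Definition unit_series p q : series K P := Series (unit_fn_finitary p q).

Lemma conv_unit_r (e : P -> P -> K) x q y : le x q -> le q y ->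
  conv le e (unit_fn q y) x y = e x q.
Proof.
move=> xq qy; rewrite /conv (@fsum_single _ _ _ _ q) //.
- by rewrite /unit_fn indT // mulr1.
- by move=> z _ nz; have [_ /unit_fn_nz []] := mul_neq0 nz.
Qed.

Lemma conv_unit_l (e : P -> P -> K) x q y : le x q -> le q y ->
  conv le (unit_fn x q) e x y = e q y.
Proof.
move=> xq qy; rewrite /conv (@fsum_single _ _ _ _ q) //.
- by rewrite /unit_fn indT // mul1r.
- by move=> z _ nz; have [/unit_fn_nz [] _] := mul_neq0 nz.
Qed.

Lemma conv_unit_l_off (e : P -> P -> K) p q x y : x <> p ->
  conv le (unit_fn p q) e x y = 0.
Proof.
move=> nxp; apply: fsum_zero => z _.
by case: (classic (unit_fn p q x z = 0)) => [->|/unit_fn_nz []//]; rewrite mul0r.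
Qed.

Lemma central_offdiag (e : series K P) : central e ->
  forall x y, le x y -> x <> y -> e x y = 0.
Proof.
move=> e_central x y xy nxy; have := e_central (unit_series y y) x y xy.
by rewrite /= conv_unit_r ?conv_unit_l_off //; apply: ple_refl.
Qed.

Lemma central_diag (e : series K P) : central e ->
  forall x y, le x y -> e x x = e y y.
Proof.
move=> e_central x y xy; have := e_central (unit_series x y) x y xy.
by rewrite /= conv_unit_r ?conv_unit_l //; apply: ple_refl.
Qed.

End CentralSeries.

Section Components.
Variables (K : fieldType) (P : poset).
Local Notation le := (@ple P).
Local Notation comp r := (component le r).
Local Notation res r a := (@restrict K _ le r a).

Lemma connected_sym (x y : P) : connected le x y -> connected le y x.
Proof. exact: rst_sym. Qed.

Lemma connected_trans (x y z : P) : connected le x y -> connected le y z -> connected le x z.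
Proof. exact: rst_trans. Qed.

Lemma connected_le (r x y : P) : connected le r x -> le x y -> connected le r y.
Proof. by move=> rx xy; apply: connected_trans rx _; apply: rst_step; left. Qed.

Lemma component_val_inj r (X Y : comp r) : proj1_sig X = proj1_sig Y -> X = Y.
Proof.
case: X Y => [x rx] [y ry] /= exy; subst y; congr exist; exact: proof_irrelevance.
Qed.

Definition component_poset (r : P) : poset :=
  @Poset (comp r) (@comp_le P le r)
    (fun X => ple_refl (proj1_sig X))
    (fun X Y XY YX => component_val_inj (ple_anti XY YX))
    (fun X Y Z => @ple_trans P _ _ _).

Lemma restrict_finitary r (a : P -> P -> K) :
  finitary le a -> finitary (@comp_le P le r) (res r a).
Proof.
move=> fa X Y [XY nXY].
have nxy : proj1_sig X <> proj1_sig Y by move/component_val_inj.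
have [s supp_s] := fa _ _ (conj XY nxy).
have pair_inj (UV UV' : comp r * comp r) :
    (proj1_sig UV.1, proj1_sig UV.2) = (proj1_sig UV'.1, proj1_sig UV'.2) -> UV = UV'.
  by case: UV UV' => [U V] [U' V'] /= [/component_val_inj -> /component_val_inj ->].
have [sC [_ mem_sC]] := preimage_list pair_inj (fun _ => True) s.
exists sC => U V XU [UV nUV] VY aUV; apply/mem_sC; split => //.
by apply: supp_s => //; split => // /component_val_inj.
Qed.

(* Convolution commutes with restriction to a component: every interval of P
   starting in the component lies in it. *)
Lemma restrict_conv r (a b : P -> P -> K) : finitary le a ->
  ieq (@comp_le P le r) (res r (conv le a b)) (conv (@comp_le P le r) (res r a) (res r b)).
Proof.
move=> fa X Y XY; have [L row] := finitary_row fa XY.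
rewrite /restrict /conv -(fsum_inj (@component_val_inj r) _ (conv_cover_row (b := b) row)) //.
move=> z [xz _]; exists (exist _ z (connected_le (proj2_sig X) xz)) => //.
Qed.

Lemma ieq_of_components (a b : P -> P -> K) :
  (forall x, exists r, connected le r x /\ ieq (@comp_le P le r) (res r a) (res r b)) ->
  ieq le a b.
Proof.
move=> local x y xy; have [r [rx ab]] := local x.
exact: (ab (exist _ x rx) (exist _ y (connected_le rx xy)) xy).
Qed.

Lemma finitary_of_components (a : P -> P -> K) :
  (forall x, exists r, connected le r x /\ finitary (@comp_le P le r) (res r a)) ->
  finitary le a.
Proof.
move=> local x y [xy nxy]; have [r [rx fa]] := local x.
pose X : comp r := exist _ x rx; pose Y : comp r := exist _ y (connected_le rx xy).
have [sC supp_sC] := fa X Y (conj xy (fun e : X = Y => nxy (f_equal (@proj1_sig _ _) e))).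
exists (map (fun UV => (proj1_sig UV.1, proj1_sig UV.2)) sC) => u v xu [uv nuv] vy auv.
pose U : comp r := exist _ u (connected_le rx xu).
pose V : comp r := exist _ v (connected_le rx (ple_trans xu uv)).
apply/List.in_map_iff; exists (U, V); split => //; apply: supp_sC => //.
by split=> // /(f_equal (@proj1_sig _ _)).
Qed.

Definition restrict_series r (a : series K P) : series K (component_poset r) :=
  @Series K (component_poset r) _ (restrict_finitary (r := r) (sfun_finitary a)).

Lemma restrict_smul r (a b : series K P) :
  (restrict_series r (a * b) ≡ restrict_series r a * restrict_series r b)%series.
Proof. by apply: restrict_conv; apply: sfun_finitary. Qed.

Lemma conv_diag (a b : P -> P -> K) x : conv le a b x x = a x x * b x x.
Proof.
rewrite /conv (@fsum_single _ _ _ _ x) //; first by split; apply: ple_refl.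
by move=> z [xz zx] _; apply: ple_anti.
Qed.

Lemma central_idempotent_component (e : series K P) r :
  central e -> (e * e ≡ e)%series ->
  (restrict_series r e ≡ 0)%series \/ (restrict_series r e ≡ 1)%series.
Proof.
move=> e_central e_idem.
have diag_const z : connected le r z -> e z z = e r r.
  elim=> [x y [xy|yx]|x|x y _ IH|x y w _ IH1 _ IH2] //.
  - by rewrite (central_diag e_central xy).
  - by rewrite (central_diag e_central yx).
  - by rewrite IH2 IH1.
have : e r r * (e r r - 1) = 0.
  have idem_rr := e_idem r r (ple_refl r); rewrite /= conv_diag in idem_rr.
  by rewrite mulrBr mulr1 idem_rr subrr.
move/eqP; rewrite mulf_eq0 subr_eq0 => /orP [/eqP err|/eqP err]; [left | right];
  move=> X Y XY; rewrite /= /restrict.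
- case: (classic (X = Y)) => [<-|nXY]; first by rewrite diag_const ?err //; apply: proj2_sig.
  by rewrite (central_offdiag e_central XY) // => /component_val_inj.
- case: (classic (X = Y)) => [<-|nXY].
    by rewrite diag_const ?err ?fi_one_diag //; apply: proj2_sig.
  by rewrite fi_one_offdiag // (central_offdiag e_central XY) // => /component_val_inj.
Qed.

End Components.

Add Parametric Morphism (K : fieldType) (P : poset) (r : P) : (@restrict_series K P r)
  with signature (@seqv K P) ==> (@seqv K (component_poset r)) as restrict_series_morph.
Proof. by move=> a b eq_ab X Y XY; apply: eq_ab. Qed.

Section Superregular.
Variables (K : fieldType) (P : poset).
Local Notation le := (@ple P).
Local Notation comp r := (component le r).
Local Notation res r a := (@restrict K _ le r a).
Local Open Scope series_scope.

Lemma superregular_components (a : series K P) : fi_superregular le a ->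
  forall r, ieq (@comp_le P le r) (res r a) (@fi_zero K (comp r)) \/
            fi_invertible (@comp_le P le r) (res r a).
Proof.
move=> [_ [b0 [fb0 [aba [bab b_unique]]]]] r; pose b := Series fb0.
have [ab_ba [ab_central ab_idem]] : a * b ≡ b * a /\ central (a * b) /\ a * b * (a * b) ≡ a * b.
  apply: unique_inverse_central => [|c [aca cac]]; first by split.
  exact: b_unique (sfun_finitary c) aca cac.
have ra : restrict_series r a ≡ restrict_series r (a * b) * restrict_series r a.
  by rewrite -restrict_smul (aba : a * b * a ≡ a).
case: (central_idempotent_component r ab_central ab_idem) => [e0|e1].
- left; suff : restrict_series r a ≡ 0 by [].
  by rewrite ra e0 smul0l.
- right; exists (res r b); split; first exact: restrict_finitary.
  split.
  + change (restrict_series r a * restrict_series r b ≡ 1).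
    by rewrite -restrict_smul.
  + change (restrict_series r b * restrict_series r a ≡ 1).
    by rewrite -restrict_smul -ab_ba.
Qed.

Definition rep (x : P) : P := epsilon (inhabits x) (connected le x).

Lemma rep_connected x : connected le (rep x) x.
Proof.
apply: connected_sym; apply: (epsilon_spec (inhabits x) (connected le x)).
by exists x; apply: rst_refl.
Qed.

Lemma rep_eq x y : connected le x y -> rep x = rep y.
Proof.
move=> xy; rewrite /rep (proof_irrelevance _ (inhabits x) (inhabits y)).
suff -> : connected le x = connected le y by [].
apply: functional_extensionality => z; apply: propositional_extensionality.
by split=> [xz|yz];
  [apply: connected_trans (connected_sym xy) xz | apply: connected_trans xy yz].
Qed.

Lemma restrict_surjective r (g : comp r -> comp r -> K) : exists h, res r h = g.
Proof.
exists (fun x y =>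
  match excluded_middle_informative (connected le r x),
        excluded_middle_informative (connected le r y) with
  | left rx, left ry => g (exist _ x rx) (exist _ y ry)
  | _, _ => 0%R end).
apply: functional_extensionality => -[x rx]; apply: functional_extensionality => -[y ry].
rewrite /restrict /=.
case: excluded_middle_informative => [rx'|]; last by [].
case: excluded_middle_informative => [ry'|]; last by [].
by congr g; apply: component_val_inj.
Qed.

Lemma glue_inverses (a : series K P) :
  (forall r, exists g, zero_or_inverse (restrict_series r a) g) ->
  exists b : series K P, forall x,
    zero_or_inverse (restrict_series (rep x) a) (restrict_series (rep x) b).
Proof.
move=> local.
pose good r (h : P -> P -> K) := exists g : series K (component_poset r),
  res r h = sfun g /\ zero_or_inverse (restrict_series r a) g.
have extend r : exists h, good r h.
  have [g g_inv] := local r; have [h hg] := restrict_surjective (sfun g).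
  by exists h, g.
pose h r := epsilon (inhabits (@fi_zero K P)) (good r).
have h_spec r : good r (h r) := epsilon_spec _ _ (extend r).
pose b x y := h (rep x) x y.
have b_local r : res (rep r) b = res (rep r) (h (rep r)).
  apply: functional_extensionality => X; apply: functional_extensionality => Y.
  have Xr : connected le (proj1_sig X) r.
    exact: connected_trans (connected_sym (proj2_sig X)) (rep_connected r).
  by rewrite /restrict /b (rep_eq Xr).
have fb : finitary le b.
  apply: finitary_of_components => x; exists (rep x); split; first exact: rep_connected.
  by have [g [hg _]] := h_spec (rep x); rewrite b_local hg; exact: (sfun_finitary g).
exists (Series fb) => x; have [g [hg g_inv]] := h_spec (rep x).
by apply: (zero_or_inverse_seqv _ g_inv) => X Y _; rewrite /= b_local hg.
Qed.

Lemma seqv_of_components (a b : series K P) :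
  (forall x, restrict_series (rep x) a ≡ restrict_series (rep x) b) -> a ≡ b.
Proof.
move=> local; apply: ieq_of_components => x.
by exists (rep x); split; [apply: rep_connected | apply: local].
Qed.

Lemma zero_or_invertible_restrict (a : series K P) r :
  ieq (@comp_le P le r) (res r a) (@fi_zero K (comp r)) \/
  fi_invertible (@comp_le P le r) (res r a) ->
  exists g, zero_or_inverse (restrict_series r a) g.
Proof.
case=> [a0|[g [fg [ag ga]]]]; first by exists 0%series; left.
by exists (@Series K (component_poset r) g fg); right.
Qed.

Lemma components_superregular (a : series K P) :
  (forall r, exists g, zero_or_inverse (restrict_series r a) g) -> fi_superregular le a.
Proof.
move=> local; have [b b_inv] := glue_inverses local.
have b_gen x := proj1 (zero_or_inverse_unique (b_inv x)).
have b_unique x := proj2 (zero_or_inverse_unique (b_inv x)).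
have aba : a * b * a ≡ a.
  by apply: seqv_of_components => x; rewrite !restrict_smul; case: (b_gen x).
split; first by exists b; split; [apply: sfun_finitary | apply: aba].
exists b; split; first exact: sfun_finitary.
split; first exact: aba.
split.
- change (b * a * b ≡ b); apply: seqv_of_components => x.
  by rewrite !restrict_smul; case: (b_gen x).
- move=> c0 fc0 aca cac; pose c := Series fc0.
  change (c ≡ b); apply: seqv_of_components => x.
  rewrite -(b_unique x (restrict_series (rep x) c)) //.
  split; rewrite -!restrict_smul; first by rewrite (aca : a * c * a ≡ a).
  by rewrite (cac : c * a * c ≡ c).
Qed.

End Superregular.

Unset Implicit Arguments.

Theorem corollary4 (K : fieldType) (T : Type) (le : T -> T -> Prop)
  (le_refl : forall x, le x x)
  (le_anti : forall x y, le x y -> le y x -> x = y)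
  (le_trans : forall x y z, le x y -> le y z -> le x z)
  (alpha : T -> T -> K) (halpha : finitary le alpha) :
  fi_superregular le alpha <->
  (forall x0 : T,
     @ieq K (component le x0) (@comp_le T le x0) (@restrict K T le x0 alpha)
       (@fi_zero K (component le x0)) \/
     @fi_invertible K (component le x0) (@comp_le T le x0)
       (@restrict K T le x0 alpha)).
Proof.
pose P := Poset le_refl le_anti le_trans.
pose a : series K P := @Series K P alpha halpha.
split=> [a_superregular | a_components].
- exact: (superregular_components (a := a)).
- apply: (components_superregular (a := a)) => r.
  exact: (zero_or_invertible_restrict (a := a) (a_components r)).
Qed.
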